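(* Let $S,\alpha$ be real symmetric $n\times n$ matrices and let $V(t)$ be the matrix-valued solution of $\frac{dV}{dt}=[S,V]+\alpha$ with $V(0)=0$. Then $\mathrm{Tr}\,V(t)^2\ge t^2\,\mathrm{Tr}\,\alpha^2$ for all real $t$. *)

From mathcomp Require Import all_boot all_order all_algebra.
From mathcomp Require Import all_classical all_reals all_analysis.

From mathcomp Require Import all_boot all_order all_algebra.
From mathcomp Require Import all_classical all_reals all_analysis.
Import Order.TTheory GRing.Theory Num.Theory numFieldNormedType.Exports.
Local Open Scope ring_scope.

(* Write U := V' = [S, V] + alpha, so that U' = [S, U]; since S is symmetric, X |-> [S, X]
   is self-adjoint for the Frobenius inner product <X, Y> = tr (X^T Y).  Hence
   <U s, U (c - s)> does not depend on s, which gives <alpha, U c> = |U (c/2)|^2.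
   Moreover |U|^2 has derivative 2 <[S, U], U>, itself nondecreasing (its derivative is
   2 |[S, U]|^2) and zero at 0 because alpha is symmetric; so |U s|^2 >= |alpha|^2.
   Therefore F t := tr (V t alpha) - t tr (alpha^2) is nondecreasing with F 0 = 0, and
   tr (V t ^2) - t^2 tr (alpha^2), whose derivative is 2 F t since tr (V [S, V]) = 0,
   is minimal at t = 0, where it vanishes. *)

Section commutator_frobenius.
Context {R : comPzRingType} {n : nat}.
Implicit Types S X Y : 'M[R]_n.

Definition mxcomm S X := S *m X - X *m S.

Definition frobenius X Y := \tr (X^T *m Y).

Lemma frobeniusC X Y : frobenius X Y = frobenius Y X.
Proof. by rewrite /frobenius -mxtrace_tr trmx_mul trmxK. Qed.

Lemma mxtrace_mul_mxcomm S X : \tr (X *m mxcomm S X) = 0.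
Proof.
by rewrite /mxcomm mulmxBr raddfB /= mulmxA mxtrace_mulC mulmxA subrr.
Qed.

Lemma frobenius_mxcommL S X Y :
  S^T = S -> frobenius (mxcomm S X) Y = frobenius X (mxcomm S Y).
Proof.
move=> sym_S; rewrite /frobenius /mxcomm linearB /= !trmx_mul sym_S.
rewrite mulmxBl mulmxBr !raddfB /= -!mulmxA.
rewrite [\tr (X^T *m (Y *m S))]mxtrace_mulC !mulmxA.
by rewrite [\tr (S *m _ *m Y)]mxtrace_mulC mulmxA.
Qed.

Lemma frobenius_mxcomm_self S X : X^T = X -> frobenius (mxcomm S X) X = 0.
Proof. by move=> sym_X; rewrite frobeniusC /frobenius sym_X mxtrace_mul_mxcomm. Qed.

End commutator_frobenius.

Lemma frobenius_ge0 (R : realDomainType) n (X : 'M[R]_n) : 0 <= frobenius X X.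
Proof.
rewrite /frobenius /mxtrace; apply: sumr_ge0 => i _; rewrite mxE.
by apply: sumr_ge0 => k _; rewrite mxE -expr2 sqr_ge0.
Qed.

Section derive_monotone.
Context {R : realType}.

Lemma ge0_derive_le {f df : R -> R} {a b : R} :
  (forall x, is_derive x (1 : R) f (df x)) -> a <= b ->
  (forall x, a <= x <= b -> 0 <= df x) -> f a <= f b.
Proof.
move=> fdf ab df_ge0.
apply: (@ger0_derive1_ndecr R f a b) => //.
- move=> x xab; rewrite derive1E; have [_ ->] := fdf x; apply: df_ge0.
  by move: xab; rewrite in_itv /= => /andP[ax xb]; rewrite !ltW.
- exact: derivable_within_continuous.
Qed.

Lemma ge0_derive_nondecr {f df : R -> R} :
  (forall x, is_derive x (1 : R) f (df x)) -> (forall x, 0 <= df x) ->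
  {homo f : x y / x <= y}.
Proof. by move=> fdf df_ge0 x y xy; apply: ge0_derive_le fdf xy _ => z _. Qed.

Lemma nondecr_derive_min0 {f df : R -> R} :
  (forall x, is_derive x (1 : R) f (df x)) -> {homo df : x y / x <= y} -> df 0 = 0 ->
  forall x, f 0 <= f x.
Proof.
move=> fdf df_nd df0 x; have [x_ge0|x_lt0] := leP 0 x.
  by apply: ge0_derive_le fdf x_ge0 _ => y /andP[y_ge0 _]; rewrite -df0 df_nd.
rewrite -lerN2.
apply: (ge0_derive_le (f := fun y => - f y) (df := fun y => - df y)) (ltW x_lt0) _.
by move=> y /andP[_ y_le0]; rewrite oppr_ge0 -df0 df_nd.
Qed.

End derive_monotone.

Section matrix_derive.
Context {R : realFieldType}.
Local Set Implicit Arguments.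

Lemma is_derive_mxP m n (M : R -> 'M[R]_(m, n)) (D : 'M[R]_(m, n)) (t : R) :
  is_derive t (1 : R) M D <-> forall i j, is_derive t (1 : R) (fun s => M s i j) (D i j).
Proof.
split=> [[dM <-] i j|dM].
  have dMij := (derivable_mxP M t 1).1 dM i j.
  by apply: DeriveDef => //; rewrite derive_mx // mxE.
have dM' : derivable M t 1 by apply/derivable_mxP => i j; case: (dM i j).
apply: DeriveDef => //; rewrite derive_mx //; apply/matrixP => i j.
by rewrite mxE; case: (dM i j).
Qed.

Lemma is_derive_mulmx m n p (A : R -> 'M[R]_(m, n)) (B : R -> 'M[R]_(n, p))
    A' B' (t : R) :
  is_derive t (1 : R) A A' -> is_derive t (1 : R) B B' ->
  is_derive t (1 : R) (fun s => A s *m B s) (A' *m B t + A t *m B').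
Proof.
move=> /is_derive_mxP dA /is_derive_mxP dB; apply/is_derive_mxP => i j.
have -> : (fun s => (A s *m B s) i j) = \sum_(k < n) (fun s => A s i k * B s k j).
  by apply/funext => s; rewrite mxE fct_sumE.
rewrite !mxE -big_split /=; apply: is_derive_sum => k.
apply: is_derive_eq (is_deriveM (dA i k) (dB k j)) _.
by rewrite addrC; congr (_ + _); exact: mulrC.
Qed.

Lemma is_derive_trmx m n (A : R -> 'M[R]_(m, n)) A' (t : R) :
  is_derive t (1 : R) A A' -> is_derive t (1 : R) (fun s => (A s)^T) A'^T.
Proof.
move=> /is_derive_mxP dA; apply/is_derive_mxP => i j; rewrite mxE.
by under eq_fun do rewrite mxE.
Qed.

Lemma is_derive_mxtrace n (A : R -> 'M[R]_n) A' (t : R) :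
  is_derive t (1 : R) A A' -> is_derive t (1 : R) (fun s => \tr (A s)) (\tr A').
Proof.
move=> /is_derive_mxP dA; rewrite /mxtrace.
have -> : (fun s => \sum_i A s i i) = \sum_(i < n) (fun s => A s i i).
  by apply/funext => s; rewrite fct_sumE.
exact: is_derive_sum.
Qed.

End matrix_derive.

Section matrix_derive_comp.
Context {R : realType}.
Local Set Implicit Arguments.

Lemma is_derive_mx_comp m n (M : R -> 'M[R]_(m, n)) (f : R -> R) D d (t : R) :
  is_derive t (1 : R) f d -> is_derive (f t) (1 : R) M D ->
  is_derive t (1 : R) (M \o f) (d *: D).
Proof.
move=> df /is_derive_mxP dM; apply/is_derive_mxP => i j; rewrite mxE mulrC.
exact: (is_derive1_comp (f := fun s => M s i j)).
Qed.

End matrix_derive_comp.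

Section commutator_derive.
Context {R : realFieldType} {n : nat}.
Implicit Types X Y : R -> 'M[R]_n.

Lemma is_derive_mxcomm (S : 'M[R]_n) {X} {X' : 'M[R]_n} {t : R} :
  is_derive t (1 : R) X X' ->
  is_derive t (1 : R) (fun s => mxcomm S (X s)) (mxcomm S X').
Proof.
move=> dX; rewrite /mxcomm.
have dSX := is_derive_mulmx (is_derive_cst S t 1) dX.
have dXS := is_derive_mulmx dX (is_derive_cst S t 1).
apply: is_derive_eq (is_deriveB dSX dXS) _.
by rewrite /= mul0mx mulmx0 add0r addr0.
Qed.

Lemma is_derive_frobenius {X Y} {X' Y' : 'M[R]_n} {t : R} :
  is_derive t (1 : R) X X' -> is_derive t (1 : R) Y Y' ->
  is_derive t (1 : R) (fun s => frobenius (X s) (Y s))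
    (frobenius X' (Y t) + frobenius (X t) Y').
Proof.
move=> dX dY; rewrite /frobenius -raddfD /=.
exact/is_derive_mxtrace/(is_derive_mulmx (is_derive_trmx dX) dY).
Qed.

End commutator_derive.

Section commutator_flow.
Context {R : realType} {n : nat} {S alpha : 'M[R]_n} {V : R -> 'M[R]_n}.
Hypotheses (sym_S : S^T = S) (sym_alpha : alpha^T = alpha).
Hypothesis derive_V : forall t, is_derive t (1 : R) V (mxcomm S (V t) + alpha).
Hypothesis V0 : V 0 = 0.

Let U t := mxcomm S (V t) + alpha.

Lemma is_derive_U t : is_derive t (1 : R) U (mxcomm S (U t)).
Proof.
have dSV := is_derive_mxcomm S (derive_V t).
by apply: is_derive_eq (is_deriveD dSV (is_derive_cst alpha t 1)) _; rewrite addr0.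
Qed.

Lemma U_at0 : U 0 = alpha.
Proof. by rewrite /U /mxcomm V0 mulmx0 mul0mx subrr add0r. Qed.

Lemma frobenius_alpha_U c : frobenius alpha (U c) = frobenius (U (c / 2)) (U (c / 2)).
Proof.
have dUc s : is_derive s (1 : R) (U \o (fun s => c - s)) (- mxcomm S (U (c - s))).
  have dc : is_derive s (1 : R) (fun s => c - s) (-1).
    by have := is_deriveB (is_derive_cst c s 1) (is_derive_id s 1); rewrite sub0r.
  by apply: is_derive_eq (is_derive_mx_comp dc (is_derive_U (c - s))) _; rewrite scaleN1r.
have dg s : is_derive s (1 : R) (fun s => frobenius (U s) (U (c - s))) 0.
  apply: is_derive_eq (is_derive_frobenius (is_derive_U s) (dUc s)) _.
  by rewrite frobenius_mxcommL // /frobenius mulmxN raddfN /= subrr.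
have := is_derive_0_is_cst 0 (c / 2) dg.
by rewrite /= subr0 U_at0 [c in c - _](splitr c) addrK.
Qed.

Lemma frobenius_U_ge s : frobenius alpha alpha <= frobenius (U s) (U s).
Proof.
pose K x := frobenius (mxcomm S (U x)) (U x).
have dK x : is_derive x (1 : R) K (frobenius (mxcomm S (U x)) (mxcomm S (U x)) *+ 2).
  have dSU := is_derive_mxcomm S (is_derive_U x).
  apply: is_derive_eq (is_derive_frobenius dSU (is_derive_U x)) _.
  by rewrite frobenius_mxcommL // mulr2n.
have dN x : is_derive x (1 : R) (fun y => frobenius (U y) (U y)) (K x *+ 2).
  apply: is_derive_eq (is_derive_frobenius (is_derive_U x) (is_derive_U x)) _.
  by rewrite [frobenius (U x) _]frobeniusC mulr2n.
have K_nd : {homo K : x y / x <= y}.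
  by apply: ge0_derive_nondecr dK _ => x; rewrite mulrn_wge0 // frobenius_ge0.
rewrite -U_at0; apply: nondecr_derive_min0 dN _ _ s.
- by move=> x y xy; rewrite lerMn2r K_nd ?orbT.
- by rewrite /K U_at0 frobenius_mxcomm_self // mul0rn.
Qed.

Lemma mxtrace_alpha_U_ge t : \tr (alpha *m alpha) <= \tr (U t *m alpha).
Proof.
have := frobenius_U_ge (t / 2); rewrite -frobenius_alpha_U /frobenius sym_alpha.
by rewrite [\tr (alpha *m U t)]mxtrace_mulC.
Qed.

Lemma mxtrace_V_alpha_nondecr :
  {homo (fun t => \tr (V t *m alpha) - t * \tr (alpha *m alpha)) : x y / x <= y}.
Proof.
apply: (ge0_derive_nondecr (df := fun t => \tr (U t *m alpha) - \tr (alpha *m alpha))).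
  move=> t.
  have dVa := is_derive_mxtrace (is_derive_mulmx (derive_V t) (is_derive_cst alpha t 1)).
  have dta := is_deriveM (is_derive_id t 1) (is_derive_cst (\tr (alpha *m alpha)) t 1).
  apply: is_derive_eq (is_deriveB dVa dta) _.
  by rewrite mulmx0 addr0 scaler0 add0r [_%:A]mulr1.
by move=> t; rewrite subr_ge0 mxtrace_alpha_U_ge.
Qed.

End commutator_flow.

Theorem lemma9 (R : realType) (n : nat) (S alpha : 'M[R]_n)
  (V : R -> 'M[R]_n)
  (hS : S^T = S) (halpha : alpha^T = alpha)
  (hV : forall t : R, is_derive t 1 V (S *m V t - V t *m S + alpha))
  (hV0 : V 0 = 0) :
  forall t : R, t ^+ 2 * \tr (alpha *m alpha) <= \tr (V t *m V t).
Proof.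
have derive_V t : is_derive t (1 : R) V (mxcomm S (V t) + alpha) := hV t.
set a := \tr (alpha *m alpha).
pose F t := \tr (V t *m alpha) - t * a.
have dD t : is_derive t (1 : R) (fun t => \tr (V t *m V t) - t ^+ 2 * a) (F t *+ 2).
  have dVV := is_derive_mxtrace (is_derive_mulmx (derive_V t) (derive_V t)).
  have dt2a := is_deriveM (is_deriveX 2 (is_derive_id t 1)) (is_derive_cst a t 1).
  apply: is_derive_eq (is_deriveB dVV dt2a) _.
  rewrite raddfD /= mxtrace_mulC mulmxDr raddfD /= mxtrace_mul_mxcomm add0r.
  rewrite scaler0 add0r [_%:A]mulr1 /F -mulr2n mulrnBl; congr (_ - _).
  by rewrite expr1 [LHS]mulrC -mulrA mulr_natl.
move=> t; rewrite -subr_ge0.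
have <- : \tr (V 0 *m V 0) - 0 ^+ 2 * a = 0.
  by rewrite hV0 mul0mx mxtrace0 expr0n mul0r subrr.
apply: (nondecr_derive_min0 dD).
- move=> x y xy; rewrite lerMn2r orbC.
  by rewrite (mxtrace_V_alpha_nondecr hS halpha derive_V hV0 _ _ xy).
- by rewrite /F hV0 mul0mx mxtrace0 mul0r subrr mul0rn.
Qed.
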